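(* The quotient $\mathbb F$-vector space $\Re/I_\nu(a,b,c)$ is spanned by the cosets $A^i+I_\nu(a,b,c)$, $i\in\mathbb N$.
   Context: $\mathbb F$ is algebraically closed with $\operatorname{char}\mathbb F\ne2$. The Racah algebra $\Re$ is the unital associative $\mathbb F$-algebra with generators $A,B,C,D$ and relations $[A,B]=[B,C]=[C,A]=2D$ together with the requirement that each of $\alpha:=[A,D]+AC-BA$, $\beta:=[B,D]+BA-CB$, $\gamma:=[C,D]+CB-AC$ is central in $\Re$; $\delta:=A+B+C$. For $a,b,c,\nu\in\mathbb F$ and $i\in\mathbb Z$: $\theta_i=(a+\tfrac\nu2-i)(a+\tfrac\nu2-i+1)$, $\theta_i^*=(b+\tfrac\nu2-i)(b+\tfrac\nu2-i+1)$, $\varphi_i=i(i-\nu-1)(a+b+c+\tfrac\nu2-i+2)(a+b-c+\tfrac\nu2-i+1)$, $\zeta=(c-b)(c+b+1)(a-\tfrac\nu2)(a+\tfrac\nu2+1)$, $\zeta^*=(a-c)(a+c+1)(b-\tfrac\nu2)(b+\tfrac\nu2+1)$, $\eta=\tfrac\nu2(\tfrac\nu2+1)+a(a+1)+b(b+1)+c(c+1)$. $I_\nu(a,b,c)$ is the left ideal of $\Re$ generated by $B-\theta_0^*$, $(B-\theta_1^* )(A-\theta_0)-\varphi_1$, $\alpha-\zeta$, $\beta-\zeta^*$, $\delta-\eta$. *)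

(* The Racah algebra is built concretely as the free unital
   associative F-algebra on A,B,C,D (syntactic terms modulo the congruence
   generated by the F-algebra axioms) further quotiented by the defining
   relations.  Elements of Re are represented by terms; equality in Re is
   [req]. *)
From HB Require Import structures.
From mathcomp Require Import all_boot all_order all_algebra.
Set Implicit Arguments. Unset Strict Implicit. Unset Printing Implicit Defensive.
Import Order.TTheory GRing.Theory Num.Theory.
Local Open Scope ring_scope.

Inductive gen := gA | gB | gC | gD.

Section Racah.
Variable F : fieldType.

Inductive term :=
| Gen of gen
| Cst of F
| Add of term & term
| Mul of term & term.

Definition tA := Gen gA.
Definition tB := Gen gB.
Definition tC := Gen gC.
Definition tD := Gen gD.
Definition TOpp (x : term) := Mul (Cst (-1)) x.
Definition TSub (x y : term) := Add x (TOpp y).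
Definition TComm (x y : term) := TSub (Mul x y) (Mul y x).

Definition alpha := Add (TComm tA tD) (TSub (Mul tA tC) (Mul tB tA)).
Definition beta  := Add (TComm tB tD) (TSub (Mul tB tA) (Mul tC tB)).
Definition gamma := Add (TComm tC tD) (TSub (Mul tC tB) (Mul tA tC)).
Definition delta := Add (Add tA tB) tC.

Inductive req : term -> term -> Prop :=
| req_refl x : req x x
| req_sym x y : req x y -> req y x
| req_trans x y z : req x y -> req y z -> req x z
| req_add x x' y y' : req x x' -> req y y' -> req (Add x y) (Add x' y')
| req_mul x x' y y' : req x x' -> req y y' -> req (Mul x y) (Mul x' y')
| req_addA x y z : req (Add x (Add y z)) (Add (Add x y) z)
| req_addC x y : req (Add x y) (Add y x)
| req_add0 x : req (Add (Cst 0) x) x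
| req_addN x : req (Add x (TOpp x)) (Cst 0)
| req_mulA x y z : req (Mul x (Mul y z)) (Mul (Mul x y) z)
| req_mul1l x : req (Mul (Cst 1) x) x
| req_mul1r x : req (Mul x (Cst 1)) x
| req_mulDl x y z : req (Mul (Add x y) z) (Add (Mul x z) (Mul y z))
| req_mulDr x y z : req (Mul x (Add y z)) (Add (Mul x y) (Mul x z))
(* F -> Re is a ring morphism into the center (F-algebra structure) *)
| req_cstD a b : req (Cst (a + b)) (Add (Cst a) (Cst b))
| req_cstM a b : req (Cst (a * b)) (Mul (Cst a) (Cst b))
| req_cstC a x : req (Mul (Cst a) x) (Mul x (Cst a))
| req_AB : req (TComm tA tB) (Mul (Cst 2) tD)
| req_BC : req (TComm tB tC) (Mul (Cst 2) tD)
| req_CA : req (TComm tC tA) (Mul (Cst 2) tD)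
| req_alpha x : req (Mul alpha x) (Mul x alpha)
| req_beta x : req (Mul beta x) (Mul x beta)
| req_gamma x : req (Mul gamma x) (Mul x gamma).

Variables a b c nu : F.
Definition nu2 := nu / 2.
Definition theta (i : nat) := (a + nu2 - i%:R) * (a + nu2 - i%:R + 1).
Definition thetas (i : nat) := (b + nu2 - i%:R) * (b + nu2 - i%:R + 1).
Definition phi (i : nat) :=
  i%:R * (i%:R - nu - 1) * (a + b + c + nu2 - i%:R + 2) * (a + b - c + nu2 - i%:R + 1).
Definition zeta := (c - b) * (c + b + 1) * (a - nu2) * (a + nu2 + 1).
Definition zetas := (a - c) * (a + c + 1) * (b - nu2) * (b + nu2 + 1).
Definition eta := nu2 * (nu2 + 1) + a * (a + 1) + b * (b + 1) + c * (c + 1).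

(* membership in the left ideal I_nu(a,b,c) of Re (on representatives) *)
Inductive inI : term -> Prop :=
| inI_g1 : inI (TSub tB (Cst (thetas 0)))
| inI_g2 : inI (TSub (Mul (TSub tB (Cst (thetas 1))) (TSub tA (Cst (theta 0)))) (Cst (phi 1)))
| inI_g3 : inI (TSub alpha (Cst zeta))
| inI_g4 : inI (TSub beta (Cst zetas))
| inI_g5 : inI (TSub delta (Cst eta))
| inI_0 : inI (Cst 0)
| inI_add x y : inI x -> inI y -> inI (Add x y)
| inI_lmul r x : inI x -> inI (Mul r x)
| inI_req x y : req x y -> inI x -> inI y.

End Racah.

Fixpoint tpow (F : fieldType) (x : term F) (n : nat) : term F :=
  if n is n'.+1 then Mul x (tpow x n') else Cst 1.

Fixpoint linA (F : fieldType) (s : seq F) (i : nat) : term F :=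
  if s is c :: s' then Add (Mul (Cst c) (tpow (tA F) i)) (linA s' i.+1)
  else Cst 0.

(* Let W be the set of x in Re that are congruent modulo I_nu(a,b,c) to a
   linear combination of powers of A.  W contains 1 and is stable under scalars
   and left multiplication by A, so it suffices to show it is stable under left
   multiplication by B, C and D.  For B one shows B A^i in W by induction on i:
   B and B A lie in W thanks to the first two generators of the ideal, and the
   identity B A^2 = 2 (alpha - delta A + A^2 + A B + B A) - A^2 B + 2 A B A,
   obtained from [A, 2D] = [A, [A, B]], expresses B A^(i+2) through terms
   already in W, alpha and delta acting as the scalars zeta and eta.  Then
   C = delta - A - B and D = [A, B] / 2. *)
From Pilot Require Import Defs.
From HB Require Import structures.
From mathcomp Require Import all_boot all_order all_algebra.
From mathcomp Require Import ssrAC boolp.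
Set Implicit Arguments. Unset Strict Implicit. Unset Printing Implicit Defensive.
Import GRing.Theory.
Local Open Scope ring_scope.

Section RacahAlgebra.
Variable F : fieldType.
Local Notation term := (term F).

(* Re is realised as the set of [req]-classes of terms, each class being the
   predicate [req x]; representatives are chosen with [cid]. *)
Definition racah : Type := {P : term -> Prop | exists x, P = req x}.
Definition racah_of (x : term) : racah := exist _ (req x) (ex_intro _ x erefl).
Definition racah_repr (r : racah) : term := projT1 (cid (proj2_sig r)).

Lemma racah_reprK : cancel racah_repr racah_of.
Proof.
case=> P hP; rewrite /racah_repr /=; case: (cid hP) => x /= Px.
by apply: eq_exist; rewrite Px.
Qed.

Lemma racah_of_req x y : req x y -> racah_of x = racah_of y.
Proof.
move=> xy; apply: eq_exist; apply: funext => z; apply: propext.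
by split=> [/(req_trans (req_sym xy))|/(req_trans xy)].
Qed.

Lemma racah_of_inj x y : racah_of x = racah_of y -> req x y.
Proof. by move=> /(congr1 (@proj1_sig _ _)) /= ->; apply: req_refl. Qed.

Lemma req_racah_repr x : req (racah_repr (racah_of x)) x.
Proof. by apply: racah_of_inj; rewrite racah_reprK. Qed.

Lemma racah_ind (P : racah -> Prop) : (forall x, P (racah_of x)) -> forall r, P r.
Proof. by move=> Px r; rewrite -(racah_reprK r). Qed.

Definition racah_add r s := racah_of (Add (racah_repr r) (racah_repr s)).
Definition racah_mul r s := racah_of (Mul (racah_repr r) (racah_repr s)).
Definition racah_opp r := racah_of (TOpp (racah_repr r)).

Lemma racah_addE x y : racah_add (racah_of x) (racah_of y) = racah_of (Add x y).
Proof. by apply: racah_of_req; apply: req_add; apply: req_racah_repr. Qed.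

Lemma racah_mulE x y : racah_mul (racah_of x) (racah_of y) = racah_of (Mul x y).
Proof. by apply: racah_of_req; apply: req_mul; apply: req_racah_repr. Qed.

Lemma racah_oppE x : racah_opp (racah_of x) = racah_of (TOpp x).
Proof. by apply: racah_of_req; apply: req_mul (req_refl _) (req_racah_repr _). Qed.

Lemma racah_addA : associative racah_add.
Proof.
elim/racah_ind=> x; elim/racah_ind=> y; elim/racah_ind=> z.
by rewrite !racah_addE; apply: racah_of_req; apply: req_addA.
Qed.

Lemma racah_addC : commutative racah_add.
Proof.
elim/racah_ind=> x; elim/racah_ind=> y.
by rewrite !racah_addE; apply: racah_of_req; apply: req_addC.
Qed.

Lemma racah_add0 : left_id (racah_of (Cst 0)) racah_add.
Proof. by elim/racah_ind=> x; rewrite racah_addE; apply: racah_of_req; apply: req_add0. Qed.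

Lemma racah_addN : left_inverse (racah_of (Cst 0)) racah_opp racah_add.
Proof.
elim/racah_ind=> x; rewrite racah_oppE racah_addE; apply: racah_of_req.
exact: req_trans (req_addC _ _) (req_addN _).
Qed.

Lemma racah_mulA : associative racah_mul.
Proof.
elim/racah_ind=> x; elim/racah_ind=> y; elim/racah_ind=> z.
by rewrite !racah_mulE; apply: racah_of_req; apply: req_mulA.
Qed.

Lemma racah_mul1l : left_id (racah_of (Cst 1)) racah_mul.
Proof. by elim/racah_ind=> x; rewrite racah_mulE; apply: racah_of_req; apply: req_mul1l. Qed.

Lemma racah_mul1r : right_id (racah_of (Cst 1)) racah_mul.
Proof. by elim/racah_ind=> x; rewrite racah_mulE; apply: racah_of_req; apply: req_mul1r. Qed.

Lemma racah_mulDl : left_distributive racah_mul racah_add.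
Proof.
elim/racah_ind=> x; elim/racah_ind=> y; elim/racah_ind=> z.
by rewrite !(racah_mulE, racah_addE); apply: racah_of_req; apply: req_mulDl.
Qed.

Lemma racah_mulDr : right_distributive racah_mul racah_add.
Proof.
elim/racah_ind=> x; elim/racah_ind=> y; elim/racah_ind=> z.
by rewrite !(racah_mulE, racah_addE); apply: racah_of_req; apply: req_mulDr.
Qed.

HB.instance Definition _ := gen_eqMixin racah.
HB.instance Definition _ := gen_choiceMixin racah.
HB.instance Definition _ :=
  GRing.isZmodule.Build racah racah_addA racah_addC racah_add0 racah_addN.
HB.instance Definition _ := GRing.Zmodule_isPzRing.Build racah
  racah_mulA racah_mul1l racah_mul1r racah_mulDl racah_mulDr.

Lemma racah_ofD x y : racah_of (Add x y) = racah_of x + racah_of y.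
Proof. by rewrite -racah_addE. Qed.

Lemma racah_ofM x y : racah_of (Mul x y) = racah_of x * racah_of y.
Proof. by rewrite -racah_mulE. Qed.

Lemma racah_ofN x : racah_of (TOpp x) = - racah_of x.
Proof. by rewrite -racah_oppE. Qed.

Lemma racah_ofB x y : racah_of (TSub x y) = racah_of x - racah_of y.
Proof. by rewrite racah_ofD racah_ofN. Qed.

Definition cst (k : F) : racah := racah_of (Cst k).

Lemma cstD k l : cst (k + l) = cst k + cst l.
Proof. by rewrite -racah_ofD; apply: racah_of_req; apply: req_cstD. Qed.

Lemma cstM k l : cst (k * l) = cst k * cst l.
Proof. by rewrite -racah_ofM; apply: racah_of_req; apply: req_cstM. Qed.

Lemma cst_comm k r : GRing.comm (cst k) r.
Proof.
by elim/racah_ind: r => x; rewrite /GRing.comm -!racah_ofM; apply: racah_of_req; apply: req_cstC.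
Qed.

Lemma cst0 : cst 0 = 0. Proof. by []. Qed.
Lemma cst1 : cst 1 = 1. Proof. by []. Qed.

Lemma cstN k : cst (- k) = - cst k.
Proof. by apply/eqP; rewrite -subr_eq0 opprK -cstD addNr. Qed.

Lemma cstn n : cst n%:R = n%:R.
Proof. by elim: n => [|n IH]; rewrite ?cst0 // -addn1 !natrD cstD IH. Qed.

Definition A : racah := racah_of (tA F).
Definition B : racah := racah_of (tB F).
Definition C : racah := racah_of (tC F).
Definition D : racah := racah_of (tD F).
Definition ralpha : racah := racah_of (alpha F).
Definition rdelta : racah := racah_of (delta F).

Lemma ralphaE : ralpha = (A * D - D * A) + (A * C - B * A).
Proof. by rewrite /ralpha racah_ofD /TComm !racah_ofB !racah_ofM. Qed.

Lemma rdeltaE : rdelta = A + B + C.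
Proof. by rewrite /rdelta !racah_ofD. Qed.

Lemma ralpha_central r : GRing.comm ralpha r.
Proof.
by elim/racah_ind: r => x; rewrite /GRing.comm -!racah_ofM; apply: racah_of_req; apply: req_alpha.
Qed.

Lemma commAB : A * B - B * A = D *+ 2.
Proof.
have := racah_of_req (req_AB F); rewrite /TComm racah_ofB !racah_ofM => ->.
by rewrite -/(cst 2) cstn mulr_natl.
Qed.

Lemma commCA : C * A - A * C = D *+ 2.
Proof.
have := racah_of_req (req_CA F); rewrite /TComm racah_ofB !racah_ofM => ->.
by rewrite -/(cst 2) cstn mulr_natl.
Qed.

Lemma commr_A_delta : GRing.comm A rdelta.
Proof.
have BA : B * A = A * B - D *+ 2 by rewrite -commAB opprB addrC subrK.
have CA : C * A = A * C + D *+ 2 by rewrite -commCA addrC subrK.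
by rewrite /GRing.comm rdeltaE !mulrDl !mulrDr BA CA addrACA subrK addrAC.
Qed.

Lemma C_rdelta : C = rdelta - (A + B).
Proof. by rewrite rdeltaE addrC addKr. Qed.

Lemma mulBA2 : B * A * A =
  (ralpha - (rdelta * A - A * (A + B) - B * A)) *+ 2 - A * A * B + (A * B * A) *+ 2.
Proof.
have mulAC : A * C = rdelta * A - A * (A + B) by rewrite {1}C_rdelta mulrBr commr_A_delta.
have commAD : ralpha - (rdelta * A - A * (A + B) - B * A) = A * D - D * A.
  by rewrite ralphaE mulAC addrK.
have double_commAD : (A * D - D * A) *+ 2 = A * A * B - A * B * A - (A * B * A - B * A * A).
  by rewrite mulrnBl -mulrnAr -mulrnAl -commAB mulrBr mulrBl !mulrA.
rewrite commAD double_commAD opprB mulr2n !addrA.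
by rewrite [RHS](ACl (((1*5)*(2*6))*((4*7)*3))) /= subrr !addNr !add0r.
Qed.

Inductive spanA : racah -> Prop :=
| spanA_pow i : spanA (A ^+ i)
| spanA_add p q : spanA p -> spanA q -> spanA (p + q)
| spanA_scale k p : spanA p -> spanA (cst k * p).

Lemma spanA_mulA p : spanA p -> spanA (A * p).
Proof.
elim=> [i | q r _ Aq _ Ar | k q _ Aq].
- by rewrite -exprS; apply: spanA_pow.
- by rewrite mulrDr; apply: spanA_add.
- by rewrite mulrA -cst_comm -mulrA; apply: spanA_scale.
Qed.

Lemma racah_of_tpowA j : racah_of (tpow (tA F) j) = A ^+ j.
Proof. by elim: j => [|j IH] //=; rewrite racah_ofM IH -exprS. Qed.

Fixpoint add_coefs (s t : seq F) : seq F :=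
  match s, t with
  | k :: s', l :: t' => (k + l) :: add_coefs s' t'
  | [::], _ => t
  | _, [::] => s
  end.

Lemma racah_of_linA_add s t j :
  racah_of (linA (add_coefs s t) j) = racah_of (linA s j) + racah_of (linA t j).
Proof.
elim: s t j => [|k s IH] [|l t] j /=; rewrite ?addr0 ?add0r //.
rewrite !racah_ofD IH !racah_ofM racah_of_tpowA -!/(cst _) cstD mulrDl.
by rewrite addrACA.
Qed.

Lemma racah_of_linA_scale k s j :
  racah_of (linA (map ( *%R k) s) j) = cst k * racah_of (linA s j).
Proof.
elim: s j => [|l s IH] j /=; first by rewrite mulr0.
by rewrite !racah_ofD IH !racah_ofM -!/(cst _) cstM mulrDr mulrA.
Qed.

Lemma racah_of_linA_pow i j : racah_of (linA (nseq i 0 ++ [:: 1]) j) = A ^+ (i + j).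
Proof.
elim: i j => [|i IH] j /=.
- by rewrite racah_ofD racah_ofM racah_of_tpowA mul1r addr0.
- by rewrite racah_ofD racah_ofM IH mul0r add0r addSnnS.
Qed.

Lemma spanA_linA p : spanA p -> exists s, p = racah_of (linA s 0).
Proof.
elim=> [i | q r _ [s ->] _ [t ->] | k q _ [s ->]].
- by exists (nseq i 0 ++ [:: 1]); rewrite racah_of_linA_pow addn0.
- by exists (add_coefs s t); rewrite racah_of_linA_add.
- by exists (map ( *%R k) s); rewrite racah_of_linA_scale.
Qed.

Variables a b c nu : F.
Local Notation I := (inI a b c nu).

Definition in_ideal (r : racah) : Prop := I (racah_repr r).

Lemma in_ideal_racah_of x : in_ideal (racah_of x) <-> I x.
Proof.
split; apply: inI_req; first exact: req_racah_repr.
exact: req_sym (req_racah_repr x).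
Qed.

Lemma ideal0 : in_ideal 0.
Proof. exact/in_ideal_racah_of/inI_0. Qed.

Lemma idealD r s : in_ideal r -> in_ideal s -> in_ideal (r + s).
Proof. by move=> Ir Is; apply/(in_ideal_racah_of (Add _ _)); apply: inI_add. Qed.

Lemma idealMl r s : in_ideal s -> in_ideal (r * s).
Proof. by move=> Is; apply/(in_ideal_racah_of (Mul _ _)); apply: inI_lmul. Qed.

Lemma ideal_B : in_ideal (B - cst (thetas b nu 0)).
Proof. by rewrite -racah_ofB; apply/in_ideal_racah_of; apply: inI_g1. Qed.

Lemma ideal_BA :
  in_ideal ((B - cst (thetas b nu 1)) * (A - cst (theta a nu 0)) - cst (phi a b c nu 1)).
Proof. by have /in_ideal_racah_of := inI_g2 a b c nu; rewrite racah_ofB racah_ofM !racah_ofB. Qed.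

Lemma ideal_alpha : in_ideal (ralpha - cst (zeta a b c nu)).
Proof. by rewrite -racah_ofB; apply/in_ideal_racah_of; apply: inI_g3. Qed.

Lemma ideal_delta : in_ideal (rdelta - cst (Defs.eta a b c nu)).
Proof. by rewrite -racah_ofB; apply/in_ideal_racah_of; apply: inI_g5. Qed.

Definition spannedA (x : racah) : Prop := exists2 p, spanA p & in_ideal (x - p).

Lemma spannedA_congr x y : in_ideal (x - y) -> spannedA y -> spannedA x.
Proof. by move=> Ixy [p Sp Iyp]; exists p => //; rewrite -(subrK y x) -addrA; apply: idealD. Qed.

Lemma spannedA_pow i : spannedA (A ^+ i).
Proof. by exists (A ^+ i); [apply: spanA_pow | rewrite subrr; apply: ideal0]. Qed.

Lemma spannedA0 : spannedA 0.
Proof.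
by exists (cst 0 * A ^+ 0); [apply/spanA_scale/spanA_pow | rewrite cst0 mul0r subrr; apply: ideal0].
Qed.

Lemma spannedA_ideal x : in_ideal x -> spannedA x.
Proof. by move=> Ix; apply: spannedA_congr spannedA0; rewrite subr0. Qed.

Lemma spannedAD x y : spannedA x -> spannedA y -> spannedA (x + y).
Proof.
move=> [p Sp Ixp] [q Sq Iyq]; exists (p + q); first exact: spanA_add.
by rewrite opprD addrACA; apply: idealD.
Qed.

Lemma spannedA_scale k x : spannedA x -> spannedA (cst k * x).
Proof.
move=> [p Sp Ixp]; exists (cst k * p); first exact: spanA_scale.
by rewrite -mulrBr; apply: idealMl.
Qed.

Lemma spannedAN x : spannedA x -> spannedA (- x).
Proof. by move=> Sx; rewrite -mulN1r -cst1 -cstN; apply: spannedA_scale. Qed.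

Lemma spannedAB x y : spannedA x -> spannedA y -> spannedA (x - y).
Proof. by move=> Sx Sy; apply: spannedAD => //; apply: spannedAN. Qed.

Lemma spannedAMn x n : spannedA x -> spannedA (x *+ n).
Proof.
move=> Sx; elim: n => [|n IH]; last by rewrite mulrS; apply: spannedAD.
by rewrite mulr0n; apply: spannedA0.
Qed.

Lemma spannedA_cst k : spannedA (cst k).
Proof. by rewrite -[cst k]mulr1 -(expr0 A); apply/spannedA_scale/spannedA_pow. Qed.

Lemma spannedA_subr x y : spannedA (x - y) -> spannedA y -> spannedA x.
Proof. by move=> Sxy Sy; rewrite -(subrK y x); apply: spannedAD. Qed.

Lemma spannedA_mulA x : spannedA x -> spannedA (A * x).
Proof.
move=> [p Sp Ixp]; exists (A * p); first exact: spanA_mulA.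
by rewrite -mulrBr; apply: idealMl.
Qed.

Lemma spannedA_mull g :
  (forall i, spannedA (g * A ^+ i)) -> forall x, spannedA x -> spannedA (g * x).
Proof.
move=> SgA x [p Sp Ixp]; apply: (spannedA_congr (y := g * p)).
  by rewrite -mulrBr; apply: idealMl.
elim: Sp {Ixp} => [i | q r _ Sgq _ Sgr | k q _ Sgq]; first exact: SgA.
- by rewrite mulrDr; apply: spannedAD.
- by rewrite mulrA -cst_comm -mulrA; apply: spannedA_scale.
Qed.

(* The ideal is only a left ideal, hence the commutation: [g y - k y = y (g - k)]. *)
Lemma spannedA_mul_cst_mod g k y :
  in_ideal (g - cst k) -> GRing.comm g y -> spannedA y -> spannedA (g * y).
Proof.
move=> Igk gy Sy; apply: (spannedA_congr (y := cst k * y)); last exact: spannedA_scale.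
by rewrite gy cst_comm -mulrBr; apply: idealMl.
Qed.

Lemma spannedA_ralpha y : spannedA y -> spannedA (ralpha * y).
Proof. exact: spannedA_mul_cst_mod ideal_alpha (ralpha_central y). Qed.

Lemma spannedA_rdelta_pow i : spannedA (rdelta * A ^+ i).
Proof.
apply: spannedA_mul_cst_mod ideal_delta _ (spannedA_pow i).
exact/commrX/commr_sym/commr_A_delta.
Qed.

Lemma spannedA_B : spannedA B.
Proof. exact: spannedA_congr ideal_B (spannedA_cst _). Qed.

Lemma spannedA_BA : spannedA (B * A).
Proof.
set t1 := cst (thetas b nu 1); set t0 := cst (theta a nu 0).
have S_BA_t : spannedA ((B - t1) * (A - t0)).
  exact: spannedA_subr (spannedA_ideal ideal_BA) (spannedA_cst _).
rewrite mulrBl mulrBr in S_BA_t.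
apply: spannedA_subr (spannedA_subr S_BA_t _) _.
- by rewrite -(expr1 A); apply/spannedA_scale/spannedAB; [apply: spannedA_pow | apply: spannedA_cst].
- by rewrite /t0 -cst_comm; apply/spannedA_scale/spannedA_B.
Qed.

Lemma spannedA_B_pow i : spannedA (B * A ^+ i).
Proof.
suff: spannedA (B * A ^+ i) /\ spannedA (B * A ^+ i.+1) by case.
elim: i => [|i [SBAi SBAi1]].
  by rewrite expr0 mulr1 expr1; split; [apply: spannedA_B | apply: spannedA_BA].
split=> //; rewrite 2!exprS !mulrA mulBA2.
rewrite !(mulrBl, mulrDl, mulrnAl) -!mulrA mulrDl mulrDr.
have SalphaAi := spannedA_ralpha (spannedA_pow i).
have SdeltaAi1 := spannedA_rdelta_pow i.+1.
rewrite -exprS in SBAi1 *.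
by repeat first [apply: spannedAB | apply: spannedAD | apply: spannedAMn | apply: spannedA_mulA
                | apply: spannedA_pow | assumption].
Qed.

Lemma spannedA_mulB x : spannedA x -> spannedA (B * x).
Proof. exact: spannedA_mull spannedA_B_pow x. Qed.

Lemma spannedA_mulC x : spannedA x -> spannedA (C * x).
Proof.
move=> Sx; rewrite C_rdelta mulrBl mulrDl; apply: spannedAB.
  exact: spannedA_mull spannedA_rdelta_pow _ Sx.
by apply: spannedAD; [apply: spannedA_mulA | apply: spannedA_mulB].
Qed.

Hypothesis two_neq0 : (2 : F) != 0.

Lemma spannedA_mulD x : spannedA x -> spannedA (D * x).
Proof.
have -> : D = cst 2^-1 * (A * B - B * A).
  by rewrite commAB -[D *+ 2]mulr_natl -cstn mulrA -cstM mulVf // cst1 mul1r.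
move=> Sx; rewrite -mulrA mulrBl -!mulrA; apply/spannedA_scale/spannedAB.
  exact/spannedA_mulA/spannedA_mulB.
exact/spannedA_mulB/spannedA_mulA.
Qed.

Lemma spannedA_mul_term t y : spannedA y -> spannedA (racah_of t * y).
Proof.
elim: t y => [g | k | t1 IH1 t2 IH2 | t1 IH1 t2 IH2] y Sy.
- case: g; [exact: spannedA_mulA | exact: spannedA_mulB | exact: spannedA_mulC | exact: spannedA_mulD].
- exact: spannedA_scale.
- by rewrite racah_ofD mulrDl; apply: spannedAD; [apply: IH1 | apply: IH2].
- by rewrite racah_ofM -mulrA; apply/IH1/IH2.
Qed.

End RacahAlgebra.

Theorem lemma3p5 (F : closedFieldType) (hchar : ~~ (2 \in [pchar F]))
  (a b c nu : F) (x : term F) :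
  exists s : seq F, inI a b c nu (TSub x (linA s 0)).
Proof.
have two_neq0 : (2 : F) != 0 by apply: contra hchar => two0; rewrite inE.
have [p Sp Ixp] : spannedA a b c nu (racah_of x).
  by rewrite -[racah_of x]mulr1; apply/spannedA_mul_term/(spannedA_pow _ _ _ _ 0).
have [s p_eq] := spanA_linA Sp.
by exists s; apply/in_ideal_racah_of; rewrite racah_ofB -p_eq.
Qed.
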